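(* For every integer $m\geq 2$ and every integer $n\geq 3$, the graph $mF_n$ (the disjoint union of $m$ copies of the fan $F_n$) is $C_3$-supermagic.
   Context: All graphs are finite and simple. For a graph $H$, a graph $G=(V,E)$ has an $H$-covering if every edge of $G$ belongs to a subgraph of $G$ isomorphic to $H$. For such $G$, an $H$-magic labeling is a bijection $\lambda: V\cup E\to\{1,2,\dots,|V|+|E|\}$ for which there is a constant $c$ such that for every subgraph $H'=(V',E')$ of $G$ isomorphic to $H$, $\sum_{v\in V'}\lambda(v)+\sum_{e\in E'}\lambda(e)=c$. It is $H$-supermagic if moreover $\{\lambda(v):v\in V\}=\{1,\dots,|V|\}$; $G$ is $H$-supermagic if it admits such a labeling. $C_k$ is the cycle of length $k$. $mG$ denotes the disjoint union of $m$ copies of $G$. For $n\geq 3$, the fan $F_n=K_1+P_n$ has vertices $c,v_1,\dots,v_n$ and edges $cv_i$ ($1\le i\le n$) and $v_iv_{i+1}$ ($1\le i\le n-1$). *)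

From mathcomp Require Import all_boot.
Set Implicit Arguments. Unset Strict Implicit. Unset Printing Implicit Defensive.

(* A simple graph is given by a finite vertex type V and an adjacency
   relation adj : rel V (symmetric and irreflexive in all our uses).
   An edge is a 2-element vertex set {u, v} with adj u v. *)
Definition edge_set (V : finType) (adj : rel V) : {set {set V}} :=
  [set e : {set V} | [exists u, exists v, adj u v && (e == [set u; v])]].

Definition edge (V : finType) (adj : rel V) : finType :=
  {e : {set V} | e \in edge_set adj}.

Definition elt (V : finType) (adj : rel V) : finType := (V + edge adj)%type.

Definition is_H_subgraph (VH : finType) (eH : rel VH) (V : finType) (adj : rel V)
    (V' : {set V}) (E' : {set edge adj}) : Prop :=
  (forall e, e \in E' -> val e \subset V') /\
  exists f : VH -> V,
    [/\ injective f, f @: setT = V' &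
        forall a b, eH a b <-> exists2 e, e \in E' & val e = [set f a; f b]].

Definition H_covering (VH : finType) (eH : rel VH) (V : finType) (adj : rel V) : Prop :=
  forall e : edge adj, exists V' E', is_H_subgraph eH V' E' /\ e \in E'.

Definition is_total_labeling (V : finType) (adj : rel V) (lam : elt adj -> nat) : Prop :=
  [/\ injective lam,
      forall x, 1 <= lam x <= #|V| + #|edge adj| &
      forall k, 1 <= k <= #|V| + #|edge adj| -> exists x, lam x = k].

Definition H_magic_labeling (VH : finType) (eH : rel VH) (V : finType) (adj : rel V)
    (lam : elt adj -> nat) : Prop :=
  is_total_labeling lam /\
  exists c, forall (V' : {set V}) (E' : {set edge adj}), is_H_subgraph eH V' E' ->
    \sum_(v in V') lam (inl v) + \sum_(e in E') lam (inr e) = c.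

Definition H_supermagic_labeling (VH : finType) (eH : rel VH) (V : finType) (adj : rel V)
    (lam : elt adj -> nat) : Prop :=
  H_magic_labeling eH lam /\
  (forall k : nat, (exists v : V, lam (inl v) = k) <-> 1 <= k <= #|V|).

Definition H_supermagic (VH : finType) (eH : rel VH) (V : finType) (adj : rel V) : Prop :=
  H_covering eH adj /\ exists lam : elt adj -> nat, H_supermagic_labeling eH lam.

Definition C3_adj : rel 'I_3 := fun a b => a != b.

(* m F_n: vertex (k, None) is the centre c of copy k, (k, Some i) is v_{i+1}
   of copy k (i < n).  Edges: c v_i and v_i v_{i+1}, within each copy. *)
Definition mfan_vertex (m n : nat) : finType := ('I_m * option 'I_n)%type.

Definition mfan_adj (m n : nat) : rel (mfan_vertex m n) :=
  fun x y => (x.1 == y.1) &&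
    match x.2, y.2 with
    | None, Some _ => true
    | Some _, None => true
    | Some i, Some j => (i.+1 == j :> nat) || (j.+1 == i :> nat)
    | None, None => false
    end.
Arguments mfan_adj : clear implicits.

From mathcomp Require Import all_boot zify.
Set Implicit Arguments. Unset Strict Implicit. Unset Printing Implicit Defensive.

(* The vertex v_i of copy k gets i * m + k + 1 and the centre of copy k gets
   n * m + k + 1, which uses up 1, ..., |V|.  The spokes c v_i come next, ordered
   by a rank of i for which rank i + rank (i + 1) drops by one when i grows; the
   path edges v_i v_{i+1} come last, in decreasing order of i.  The triangles of
   mF_n are exactly the c v_i v_{i+1}; when i grows, their vertex weight gains 2m
   while the two spokes together and the path edge each lose m, so every triangle
   has the same weight.  Each class of labels is a mixed-radix numbering with
   digit k, hence the labeling is a bijection. *)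

Lemma sum_set2 (T : finType) (F : T -> nat) (a b : T) : a != b ->
  \sum_(x in [set a; b]) F x = F a + F b.
Proof. by move=> ab; rewrite big_setU1 ?big_set1 // inE. Qed.

Lemma sum_set3 (T : finType) (F : T -> nat) (a b c : T) :
  [&& a != b, a != c & b != c] -> \sum_(x in [set a; b; c]) F x = F a + F b + F c.
Proof.
case/and3P=> ab ac bc; rewrite [[set a; b; c]]setUC big_setU1 ?sum_set2 //.
  exact: addnC.
by rewrite !inE negb_or !(eq_sym c) ac bc.
Qed.

Definition o0 : 'I_3 := @Ordinal 3 0 isT.
Definition o1 : 'I_3 := @Ordinal 3 1 isT.
Definition o2 : 'I_3 := @Ordinal 3 2 isT.

Lemma ord3P (a : 'I_3) : [\/ a = o0, a = o1 | a = o2].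
Proof.
by case: a => [[|[|[|//]]] ?]; [constructor 1|constructor 2|constructor 3]; apply: val_inj.
Qed.

Lemma setT_ord3 : [set: 'I_3] = [set o0; o1; o2].
Proof. by apply/setP => a; rewrite !inE; case: (ord3P a) => ->. Qed.

Section Triangles.
Variables (V : finType) (adj : rel V).

Lemma edge_setP (e : edge adj) : exists u v, adj u v /\ val e = [set u; v].
Proof.
by have := valP e; rewrite inE => /existsP [u /existsP [v /andP [? /eqP ?]]]; exists u, v.
Qed.

Lemma C3_subgraph_sum (w : elt adj -> nat) V' E' : is_H_subgraph C3_adj V' E' ->
  exists x y z (exy exz eyz : edge adj),
  [/\ [&& x != y, x != z & y != z],
      val exy = [set x; y], val exz = [set x; z], val eyz = [set y; z] &
      \sum_(v in V') w (inl v) + \sum_(e in E') w (inr e) =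
      w (inl x) + w (inl y) + w (inl z) + (w (inr exy) + w (inr exz) + w (inr eyz))].
Proof.
case=> E'sub [f [f_inj f_im f_edge]].
have f_neq a b : a != b -> f a != f b by rewrite (inj_eq f_inj).
have [e01 E'01 v01] := (f_edge o0 o1).1 isT.
have [e02 E'02 v02] := (f_edge o0 o2).1 isT.
have [e12 E'12 v12] := (f_edge o1 o2).1 isT.
have fV : [&& f o0 != f o1, f o0 != f o2 & f o1 != f o2] by rewrite !f_neq.
have V'E : V' = [set f o0; f o1; f o2].
  by rewrite -f_im setT_ord3 !imsetU !imset_set1.
have val_neq (e e' : edge adj) x : x \in val e -> x \notin val e' -> e != e'.
  by move=> xe xe'; apply: contraNneq xe' => <-.
have eE : [&& e01 != e02, e01 != e12 & e02 != e12].
  have f_neq' a b : a != b -> f b != f a by rewrite eq_sym; apply: f_neq.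
  apply/and3P; split; [apply: (@val_neq _ _ (f o1))|apply: (@val_neq _ _ (f o0))..];
    by rewrite ?v01 ?v02 ?v12 !inE ?eqxx ?orbT //= negb_or !f_neq'.
have E'E : E' = [set e01; e02; e12].
  apply/setP => e; rewrite !inE; apply/idP/idP; last first.
    by case/orP => [/orP[]|] /eqP ->.
  move=> eE'; have [u [v [_ ve]]] := edge_setP e.
  have /subsetP := E'sub e eE'; rewrite ve -f_im => sub.
  have [a _ ua] := imsetP (sub u (set21 u v)).
  have [b _ vb] := imsetP (sub v (set22 u v)).
  subst u v; clear sub.
  have : C3_adj a b by apply/(f_edge a b); exists e.
  rewrite /C3_adj.
  wlog ab : a b ve / a < b.
    move=> IH; case: (ltngtP a b) => [|ba|/val_inj->]; [exact: IH| |by rewrite eqxx].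
    by rewrite eq_sym; apply: IH ba; rewrite ve setUC.
  move=> _; case: (ord3P a) (ord3P b) ab ve => -> [] -> // _ ve.
  - have -> : e = e01 by apply: val_inj; rewrite ve v01.
    by rewrite eqxx.
  - have -> : e = e02 by apply: val_inj; rewrite ve v02.
    by rewrite eqxx orbT.
  - have -> : e = e12 by apply: val_inj; rewrite ve v12.
    by rewrite eqxx orbT.
exists (f o0), (f o1), (f o2), e01, e02, e12; split => //.
by rewrite V'E E'E !sum_set3.
Qed.

Lemma edge_set2 x y : adj x y -> [set x; y] \in edge_set adj.
Proof.
by move=> xy; rewrite inE; apply/existsP; exists x; apply/existsP; exists y; rewrite xy eqxx.
Qed.

Definition edge_of x y (xy : adj x y) : edge adj := Sub [set x; y] (edge_set2 xy).

Hypothesis adj_sym : symmetric adj.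

Lemma edge_adj (e : edge adj) x y : val e = [set x; y] -> x != y -> adj x y.
Proof.
have [u [v [uv ->]]] := edge_setP e => uvE xy.
have /set2P xuv : x \in [set u; v] by rewrite uvE set21.
have /set2P yuv : y \in [set u; v] by rewrite uvE set22.
by case: xuv yuv xy => -> [] ->; rewrite ?eqxx // adj_sym.
Qed.

Hypothesis adj_irr : irreflexive adj.

Lemma triangle_subgraph x y z : adj x y -> adj x z -> adj y z ->
  is_H_subgraph C3_adj [set x; y; z] [set e : edge adj | val e \subset [set x; y; z]].
Proof.
move=> xy xz yz; pose f (a : 'I_3) := nth x [:: x; y; z] a.
have f_adj a b : a != b -> adj (f a) (f b).
  by case: (ord3P a) (ord3P b) => -> [] -> //= _; rewrite adj_sym.
have f_in a : f a \in [set x; y; z].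
  by case: (ord3P a) => ->; rewrite !inE eqxx ?orbT.
split=> [e|]; first by rewrite inE.
exists f; split=> [a b fab | | a b].
- by apply/eqP; apply: contraT => /f_adj; rewrite fab adj_irr.
- by rewrite setT_ord3 !imsetU !imset_set1.
- split=> [ab | [e _ ve]].
    exists (edge_of (f_adj a b ab)) => //.
    by rewrite inE; apply/subsetP => u /set2P [] ->.
  apply/eqP => ab; subst b; have [u [v [uv ve']]] := edge_setP e.
  have /set1P ua : u \in [set f a] by rewrite -[[set f a]]setUid -ve ve' set21.
  have /set1P va : v \in [set f a] by rewrite -[[set f a]]setUid -ve ve' set22.
  by move: uv; rewrite ua va adj_irr.
Qed.

Lemma C3_covering : (forall x y, adj x y -> exists z, adj x z && adj y z) ->
  H_covering C3_adj adj.
Proof.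
move=> common e; have [x [y [xy ve]]] := edge_setP e.
have [z /andP [xz yz]] := common x y xy.
exists [set x; y; z], [set e : edge adj | val e \subset [set x; y; z]].
split; first exact: triangle_subgraph.
by rewrite inE ve; apply/subsetP => u; rewrite !inE => /orP [] ->; rewrite ?orbT.
Qed.
End Triangles.

Lemma mixed_radix_lt m n k i : k < m -> i < n -> i * m + k < n * m.
Proof. by move=> km lt_in; have := leq_mul lt_in (leqnn m); rewrite mulSn; lia. Qed.

Lemma mixed_radix_inj m k k' i i' : k < m -> k' < m ->
  i * m + k = i' * m + k' -> i = i' /\ k = k'.
Proof.
move=> km k'm E; have m_gt0 : 0 < m by apply: leq_ltn_trans km.
have := congr1 (divn^~ m) E; have := congr1 (modn^~ m) E.
by rewrite !modnMDl !divnMDl // !modn_small // !divn_small // !addn0.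
Qed.

Lemma injective_interval_onto (T : finType) (f : T -> nat) N :
  injective f -> (forall x, 0 < f x <= N) -> N <= #|T| ->
  #|T| = N /\ forall k, 0 < k <= N -> exists x, f x = k.
Proof.
move=> f_inj f_range N_le.
have s_uniq : uniq (map f (enum T)) by rewrite map_inj_uniq ?enum_uniq.
have s_sub : {subset map f (enum T) <= iota 1 N}.
  by move=> _ /mapP [x _ ->]; rewrite mem_iota; have := f_range x; lia.
have [|s_size s_eq] := uniq_min_size s_uniq s_sub.
  by rewrite size_iota size_map -cardE.
split; first by rewrite cardE -(size_map f) s_size size_iota.
move=> k k_range; have : k \in map f (enum T) by rewrite s_eq mem_iota; lia.
by case/mapP => x _ ->; exists x.
Qed.

Section FanLabeling.
Variables m n : nat.
Hypothesis n_gt2 : 2 < n.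

Local Notation V := (mfan_vertex m n).
Local Notation adj := (mfan_adj m n).

Lemma mfan_adj_sym : symmetric adj.
Proof. by move=> [a [i|]] [b [j|]]; rewrite /mfan_adj /= eq_sym // orbC. Qed.

Lemma mfan_adj_irr : irreflexive adj.
Proof. by move=> [a [i|]]; rewrite /mfan_adj //= eqxx /=; lia. Qed.

Lemma path_neighbour (i : 'I_n) : exists j : 'I_n, (i.+1 == j :> nat) || (j.+1 == i :> nat).
Proof.
case: (ltnP i.+1 n) => [lt|ge]; first by exists (Ordinal lt); rewrite eqxx.
have lt : i.-1 < n by have := ltn_ord i; lia.
by exists (Ordinal lt); apply/orP; right; apply/eqP => /=; lia.
Qed.

Lemma mfan_common_neighbour x y : adj x y -> exists z, adj x z && adj y z.
Proof.
case: x y => [a [i|]] [b [j|]]; rewrite /mfan_adj //= => /andP [/eqP <-] // _.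
- by exists (a, None); rewrite /= !eqxx.
- have [l il] := path_neighbour i.
  by exists (a, Some l); rewrite /= !eqxx il.
- have [l jl] := path_neighbour j.
  by exists (a, Some l); rewrite /= !eqxx jl.
Qed.

(* Ranks n-1, n/2-1, n-2, n/2-2, ... : even and odd indices count down separately. *)
Definition spoke_rank (i : nat) : nat :=
  if i %% 2 == 0 then n.-1 - i %/ 2 else n %/ 2 - i.+1 %/ 2.

Lemma spoke_rank_lt i : i < n -> spoke_rank i < n.
Proof. by rewrite /spoke_rank; case: eqP; lia. Qed.

Lemma spoke_rank_inj i j : i < n -> j < n -> spoke_rank i = spoke_rank j -> i = j.
Proof. by rewrite /spoke_rank; case: eqP; case: eqP; lia. Qed.

Lemma spoke_rank_step i : i.+1 < n ->
  spoke_rank i + spoke_rank i.+1 + i + i.+1 = n.-1 + n %/ 2 + i.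
Proof. by rewrite /spoke_rank; case: eqP; case: eqP; lia. Qed.

Definition nvert := m * n.+1.

Definition vertex_label (x : V) : nat :=
  ((if x.2 is Some i then val i else n) * m + x.1).+1.

Definition spoke_label (k i : nat) : nat := nvert + (spoke_rank i * m + (m.-1 - k)).+1.

Definition path_label (k i : nat) : nat :=
  nvert + m * n + ((n.-2 - i) * m + (m.-1 - k)).+1.

Definition path_index (x : V) : nat := if x.2 is Some i then val i else 0.

(* An edge lies in a single copy k, so k is half the sum of the copy indices of its
   ends; it is a spoke c v_i exactly when it contains a centre, and then its index
   sum is i, while a path edge v_i v_{i+1} has index sum 2i + 1. *)
Definition edge_label (s : {set V}) : nat :=
  let k := (\sum_(x in s) (x.1 : nat)) %/ 2 in
  let i := \sum_(x in s) path_index x in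
  if [exists x in s, x.2 == None] then spoke_label k i else path_label k i./2.

Definition mfan_label (z : elt adj) : nat :=
  match z with inl v => vertex_label v | inr e => edge_label (val e) end.

Lemma edge_label_spoke (k : 'I_m) (i : 'I_n) :
  edge_label [set (k, None); (k, Some i)] = spoke_label k i.
Proof.
rewrite /edge_label !sum_set2 ?xpair_eqE ?eqxx //= (_ : (k + k) %/ 2 = k); last by lia.
have -> // : [exists x in [set (k, None); (k, Some i)], x.2 == None].
by apply/existsP; exists (k, None); rewrite set21.
Qed.

Lemma edge_label_path (k : 'I_m) (i j : 'I_n) : j = i.+1 :> nat ->
  edge_label [set (k, Some i); (k, Some j)] = path_label k i.
Proof.
move=> ji; have ij : (k, Some i) != (k, Some j) :> V.
  by apply/eqP => -[] /(congr1 val) /=; rewrite ji; lia.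
rewrite /edge_label !sum_set2 //= (_ : (k + k) %/ 2 = k); last by lia.
have -> : [exists x in [set (k, Some i); (k, Some j)], x.2 == None] = false.
  by apply/existsP => -[x /andP [/set2P [] ->]].
by rewrite /path_index /= ji (_ : (i + i.+1)./2 = i) //; lia.
Qed.

Definition triangle_weight (x y z : V) : nat :=
  vertex_label x + vertex_label y + vertex_label z +
  (edge_label [set x; y] + edge_label [set x; z] + edge_label [set y; z]).

Lemma triangle_weightC12 x y z : triangle_weight x y z = triangle_weight y x z.
Proof. rewrite /triangle_weight [[set y; x]]setUC; lia. Qed.

Lemma triangle_weightC23 x y z : triangle_weight x y z = triangle_weight x z y.
Proof. rewrite /triangle_weight [[set z; y]]setUC; lia. Qed.

Definition magic_const : nat := (7 * n + 3 + n %/ 2) * m + 3.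

Lemma center_triangle_weight (k : 'I_m) (i j : 'I_n) : j = i.+1 :> nat ->
  triangle_weight (k, None) (k, Some i) (k, Some j) = magic_const.
Proof.
move=> ji; have lt_i1n : i.+1 < n by rewrite -ji.
rewrite /triangle_weight !edge_label_spoke edge_label_path // /vertex_label /= ji.
rewrite /spoke_label /path_label /magic_const.
have := congr1 (muln^~ m) (spoke_rank_step lt_i1n).
have : i * m <= n.-2 * m by apply: leq_mul; lia.
have := ltn_ord k.
rewrite /nvert !mulnDl mulnBl !mulSn.
lia.
Qed.

Lemma mfan_triangle_weight x y z : adj x y -> adj x z -> adj y z ->
  triangle_weight x y z = magic_const.
Proof.
case: x y z => [a [i|]] [b [j|]] [c [l|]]; rewrite /mfan_adj /= ?andbT ?andbF //.
- move=> /andP [/eqP <- xy] /andP [/eqP <- xz] /andP [_ yz].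
  by case/orP: xy => /eqP xy; case/orP: xz => /eqP xz; case/orP: yz => /eqP yz; lia.
- move=> /andP [/eqP <- xy] /eqP <- _.
  rewrite triangle_weightC23 triangle_weightC12.
  by case/orP: xy => /eqP xy; [|rewrite triangle_weightC23]; apply: center_triangle_weight.
- move=> /eqP <- /andP [/eqP <- xz] _.
  rewrite triangle_weightC12.
  by case/orP: xz => /eqP xz; [|rewrite triangle_weightC23]; apply: center_triangle_weight.
- move=> /eqP <- /eqP <- /andP [_ yz].
  by case/orP: yz => /eqP yz; [|rewrite triangle_weightC23]; apply: center_triangle_weight.
Qed.

Lemma vertex_label_inj : injective vertex_label.
Proof.
move=> [k x] [k' x'] /eqP; rewrite eqSS => /eqP.
move/(mixed_radix_inj (ltn_ord k) (ltn_ord k')) => [+ /val_inj <-].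
case: x x' => [i|] [i'|] //= => [/val_inj -> // | | ].
- by have := ltn_ord i; lia.
- by have := ltn_ord i'; lia.
Qed.

Lemma vertex_label_range x : 0 < vertex_label x <= nvert.
Proof.
case: x => k x; apply/andP; split=> //; rewrite /vertex_label /nvert (mulnC m) /=.
apply: mixed_radix_lt (ltn_ord k) _.
by case: x => [i|] //; rewrite ltnS ltnW.
Qed.

Lemma spoke_label_inj (k k' : 'I_m) (i i' : 'I_n) :
  spoke_label k i = spoke_label k' i' -> k = k' /\ i = i'.
Proof.
have lt_rev (l : 'I_m) : m.-1 - l < m by have := ltn_ord l; lia.
move/eqP; rewrite /spoke_label eqn_add2l eqSS => /eqP.
case/(mixed_radix_inj (lt_rev k) (lt_rev k')).
move=> /(spoke_rank_inj (ltn_ord i) (ltn_ord i')) eq_i eq_k.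
split; apply: val_inj; last exact: eq_i.
by have := ltn_ord k; have := ltn_ord k'; rewrite /=; lia.
Qed.

Lemma spoke_label_range (k : 'I_m) (i : 'I_n) :
  nvert < spoke_label k i <= nvert + m * n.
Proof.
apply/andP; split; first by rewrite /spoke_label addnS ltnS leq_addr.
rewrite /spoke_label leq_add2l (mulnC m).
apply: mixed_radix_lt; first by have := ltn_ord k; lia.
exact: spoke_rank_lt.
Qed.

Lemma path_label_inj (k k' : 'I_m) (i i' : 'I_n.-1) :
  path_label k i = path_label k' i' -> k = k' /\ i = i'.
Proof.
have lt_rev (l : 'I_m) : m.-1 - l < m by have := ltn_ord l; lia.
move/eqP; rewrite /path_label eqn_add2l eqSS => /eqP.
case/(mixed_radix_inj (lt_rev k) (lt_rev k')) => eq_i eq_k.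
have := ltn_ord k; have := ltn_ord k'; have := ltn_ord i; have := ltn_ord i'.
by split; apply: val_inj => /=; lia.
Qed.

Lemma path_label_range (k : 'I_m) (i : 'I_n.-1) :
  nvert + m * n < path_label k i <= nvert + m * n + m * n.-1.
Proof.
apply/andP; split; first by rewrite /path_label addnS ltnS leq_addr.
rewrite /path_label leq_add2l (mulnC m).
apply: mixed_radix_lt; first by have := ltn_ord k; lia.
by have := ltn_ord i; lia.
Qed.

Lemma spoke_adj (k : 'I_m) (i : 'I_n) : adj (k, None) (k, Some i).
Proof. by rewrite /mfan_adj /= eqxx. Qed.

Lemma path_succ_lt (i : 'I_n.-1) : i.+1 < n.
Proof. by have := ltn_ord i; lia. Qed.

Definition path_start (i : 'I_n.-1) : 'I_n := widen_ord (leq_pred n) i.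
Definition path_succ (i : 'I_n.-1) : 'I_n := Ordinal (path_succ_lt i).

Lemma path_adj (k : 'I_m) (i : 'I_n.-1) : adj (k, Some (path_start i)) (k, Some (path_succ i)).
Proof. by rewrite /mfan_adj /= !eqxx. Qed.

Definition mfan_item : finType := (V + ('I_m * 'I_n + 'I_m * 'I_n.-1))%type.

Definition item_elt (u : mfan_item) : elt adj :=
  match u with
  | inl v => inl v
  | inr (inl (k, i)) => inr (edge_of (spoke_adj k i))
  | inr (inr (k, i)) => inr (edge_of (path_adj k i))
  end.

Definition item_label (u : mfan_item) : nat :=
  match u with
  | inl v => vertex_label v
  | inr (inl (k, i)) => spoke_label k i
  | inr (inr (k, i)) => path_label k i
  end.

Lemma mfan_label_item u : mfan_label (item_elt u) = item_label u.
Proof. by case: u => [v|[[k i]|[k i]]] //=; [exact: edge_label_spoke|exact: edge_label_path]. Qed.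

Lemma item_elt_surj x : exists u, item_elt u = x.
Proof.
case: x => [v|e]; first by exists (inl v).
have [[a [i|]] [[b [j|]] [+ ve]]] := edge_setP e; move: ve; rewrite /mfan_adj //=.
- move=> ve /andP [/eqP ab]; subst b; case/orP => /eqP ij.
  + have lt_i : i < n.-1 by have := ltn_ord j; lia.
    exists (inr (inr (a, Ordinal lt_i))); congr inr; apply: val_inj; rewrite /= ve.
    by congr [set (a, Some _); (a, Some _)]; apply: val_inj.
  + have lt_j : j < n.-1 by have := ltn_ord i; lia.
    exists (inr (inr (a, Ordinal lt_j))); congr inr; apply: val_inj; rewrite /= ve setUC.
    by congr [set (a, Some _); (a, Some _)]; apply: val_inj.
- move=> ve /andP [/eqP ab _]; subst b; exists (inr (inl (a, i))); congr inr; apply: val_inj.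
  by rewrite /= ve setUC.
- move=> ve /andP [/eqP ab _]; subst b; exists (inr (inl (a, j))); congr inr; apply: val_inj.
  by rewrite /= ve.
- by move=> _ /andP [].
Qed.

Definition nitems : nat := nvert + m * n + m * n.-1.

Lemma card_mfan_item : #|mfan_item| = nitems.
Proof. by rewrite !card_sum !card_prod card_option !card_ord /nitems /nvert addnA. Qed.

Lemma item_label_inj : injective item_label.
Proof.
move=> [v|[[k i]|[k i]]] [v'|[[k' i']|[k' i']]] /= E.
all: try have := vertex_label_range v; try have := vertex_label_range v'.
all: try have := spoke_label_range k i; try have := spoke_label_range k' i'.
all: try have := path_label_range k i; try have := path_label_range k' i'.
all: move=> *; try (exfalso; lia).
- by rewrite (vertex_label_inj E).
- by case: (spoke_label_inj E) => -> ->.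
- by case: (path_label_inj E) => -> ->.
Qed.

Lemma item_elt_inj : injective item_elt.
Proof. by move=> u u' /(congr1 mfan_label); rewrite !mfan_label_item => /item_label_inj. Qed.

Lemma item_label_range u : 0 < item_label u <= nitems.
Proof.
case: u => [v|[[k i]|[k i]]] /=.
- by have := vertex_label_range v; rewrite /nitems; lia.
- by have := spoke_label_range k i; rewrite /nitems; lia.
- by have := path_label_range k i; rewrite /nitems; lia.
Qed.

Lemma mfan_label_inj : injective mfan_label.
Proof.
move=> x y; have [u <-] := item_elt_surj x; have [u' <-] := item_elt_surj y.
by rewrite !mfan_label_item => /item_label_inj ->.
Qed.

Lemma mfan_label_range x : 0 < mfan_label x <= nitems.
Proof. by have [u <-] := item_elt_surj x; rewrite mfan_label_item item_label_range. Qed.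

Lemma nvert_lt_edge_label (e : edge adj) : nvert < mfan_label (inr e).
Proof.
have [[v|[[k i]|[k i]]] ue] := item_elt_surj (inr e) => //; rewrite -ue mfan_label_item /=.
- by have /andP [] := spoke_label_range k i.
- by have := path_label_range k i; lia.
Qed.

Lemma mfan_supermagic_labeling : H_supermagic_labeling C3_adj mfan_label.
Proof.
have nitems_le : nitems <= #|elt adj| by rewrite -card_mfan_item; apply: leq_card item_elt_inj.
have [card_elt onto] := injective_interval_onto mfan_label_inj mfan_label_range nitems_le.
have card_VE : #|V| + #|edge adj| = nitems by rewrite -card_sum; exact: card_elt.
have card_V : #|V| = nvert by rewrite card_prod card_option !card_ord.
split; [split|].
- split=> [|x|k]; rewrite ?card_VE; [exact: mfan_label_inj|exact: mfan_label_range|exact: onto].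
- exists magic_const => V' E' /(C3_subgraph_sum mfan_label).
  case=> [x [y [z [exy [exz [eyz [/and3P [xy xz yz] vxy vxz vyz ->]]]]]]].
  rewrite /= vxy vxz vyz.
  by apply: mfan_triangle_weight; apply: (edge_adj mfan_adj_sym); eassumption.
- move=> k; rewrite card_V; split=> [[v <-]|k_le]; first exact: vertex_label_range.
  have [|[v|e] ek] := onto k; first by move: k_le; rewrite /nitems; lia.
    by exists v.
  by have := nvert_lt_edge_label e; rewrite ek; lia.
Qed.
End FanLabeling.

Theorem theorem2 (m n : nat) : 2 <= m -> 3 <= n -> H_supermagic C3_adj (mfan_adj m n).
Proof.
(* The construction works for every m. *)
move=> _ n_gt2; split.
- apply: C3_covering; [exact: mfan_adj_sym | exact: mfan_adj_irr | exact: mfan_common_neighbour].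
- by exists (@mfan_label m n); exact: mfan_supermagic_labeling.
Qed.
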